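(* Let $C,D$ be $\mathcal{FL}_{\bot\mathit{reg}}$ concept descriptions and $\mathcal T$ an $\mathcal{FL}_{\bot\mathit{reg}}$ TBox. Let $\Sigma_C\subseteq N_C$ and $\Sigma_R\subseteq N_R$ be the sets of all concept names, respectively role names, occurring in $C$, $D$ or $\mathcal T$, and let $B\in N_C\setminus\Sigma_C$ be a fresh concept name. For a concept description $K$ let $K^B$ be obtained from $K$ by replacing every occurrence of $\bot$ with $B$, and let $\mathcal T^B$ be obtained from $\mathcal T$ by replacing every occurrence of $\bot$ with $B$. Let $\mathcal R$ be the TBox consisting of the axioms $B\sqsubseteq A$ for every $A\in\Sigma_C$ and $B\sqsubseteq\forall r.B$ for every $r\in\Sigma_R$. Then $C\sqsubseteq_{\mathcal T}D$ holds if and only if $C^B\sqsubseteq_{\mathcal T^B\cup\mathcal R}D^B$ holds (the latter being an instance in $\mathcal{FL}_{\mathit{reg}}$).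
   Context: Let $N_C$ and $N_R$ be disjoint countably infinite sets of concept names and role names. Regular role expressions are generated by $E ::= \emptyset \mid \varepsilon \mid r \mid (E+E) \mid (EE) \mid E^{*}$ with $r\in N_R$, with languages $\mathcal L(E)\subseteq N_R^*$ defined as usual. $\mathcal{FL}_{\bot\mathit{reg}}$ concept descriptions are generated by $C ::= A \mid \top \mid \bot \mid (C\sqcap C) \mid \forall E.C$ with $A\in N_C$; $\mathcal{FL}_{\mathit{reg}}$ is the fragment without $\bot$. An interpretation $\mathcal I=(\Delta^{\mathcal I},\cdot^{\mathcal I})$ has nonempty domain, $A^{\mathcal I}\subseteq\Delta^{\mathcal I}$, $r^{\mathcal I}\subseteq(\Delta^{\mathcal I})^2$; $E^{\mathcal I}$ is the union over words $r_1\cdots r_n\in\mathcal L(E)$ of $r_1^{\mathcal I}\circ\cdots\circ r_n^{\mathcal I}$ (identity for the empty word); $\top^{\mathcal I}=\Delta^{\mathcal I}$, $\bot^{\mathcal I}=\emptyset$, $(C\sqcap D)^{\mathcal I}=C^{\mathcal I}\cap D^{\mathcal I}$, $(\forall E.C)^{\mathcal I}=\{x\mid y\in C^{\mathcal I}$ for all $y$ with $(x,y)\in E^{\mathcal I}\}$. A TBox is a finite set of axioms $K\sqsubseteq M$ between concept descriptions; $\mathcal I$ is a model of a TBox if $K^{\mathcal I}\subseteq M^{\mathcal I}$ for all its axioms; $C\sqsubseteq_{\mathcal T}D$ means $C^{\mathcal I}\subseteq D^{\mathcal I}$ for every model $\mathcal I$ of $\mathcal T$. *)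

From Stdlib Require Import List.
Import ListNotations.

(* Concept names and role names: two disjoint countably infinite sets,
   represented by two distinct copies of nat. *)
Definition CName := nat.
Definition RName := nat.

Inductive rexp : Type :=
| REmpty : rexp
| REps : rexp
| RRole : RName -> rexp
| RPlus : rexp -> rexp -> rexp
| RConc : rexp -> rexp -> rexp
| RStar : rexp -> rexp.

Inductive lang : rexp -> list RName -> Prop :=
| L_eps : lang REps []
| L_role : forall r, lang (RRole r) [r]
| L_plusl : forall E F w, lang E w -> lang (RPlus E F) w
| L_plusr : forall E F w, lang F w -> lang (RPlus E F) w
| L_conc : forall E F u v, lang E u -> lang F v -> lang (RConc E F) (u ++ v)
| L_star0 : forall E, lang (RStar E) []
| L_starS : forall E u v, lang E u -> lang (RStar E) v -> lang (RStar E) (u ++ v).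

Inductive concept : Type :=
| CAtom : CName -> concept
| CTop : concept
| CBot : concept
| CAnd : concept -> concept -> concept
| CAll : rexp -> concept -> concept.

Fixpoint bot_free (C : concept) : Prop :=
  match C with
  | CBot => False
  | CAnd C1 C2 => bot_free C1 /\ bot_free C2
  | CAll _ C1 => bot_free C1
  | _ => True
  end.

Definition axiom := (concept * concept)%type.
Definition tbox := list axiom.

Record interp := {
  dom : Type;
  dom_ne : inhabited dom;
  cint : CName -> dom -> Prop;
  rint : RName -> dom -> dom -> Prop
}.

Fixpoint word_rel (I : interp) (w : list RName) : dom I -> dom I -> Prop :=
  match w with
  | [] => fun x y => x = y
  | r :: w' => fun x y => exists z, rint I r x z /\ word_rel I w' z y
  end.

Definition rexp_rel (I : interp) (E : rexp) (x y : dom I) : Prop :=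
  exists w, lang E w /\ word_rel I w x y.

Fixpoint cext (I : interp) (C : concept) : dom I -> Prop :=
  match C with
  | CAtom A => cint I A
  | CTop => fun _ => True
  | CBot => fun _ => False
  | CAnd C1 C2 => fun x => cext I C1 x /\ cext I C2 x
  | CAll E C1 => fun x => forall y, rexp_rel I E x y -> cext I C1 y
  end.

Definition model (I : interp) (T : tbox) : Prop :=
  forall ax, In ax T -> forall x, cext I (fst ax) x -> cext I (snd ax) x.

Definition subsumed (T : tbox) (C D : concept) : Prop :=
  forall I : interp, model I T -> forall x, cext I C x -> cext I D x.

Fixpoint rexp_roles (E : rexp) : list RName :=
  match E with
  | REmpty | REps => []
  | RRole r => [r]
  | RPlus E F | RConc E F => rexp_roles E ++ rexp_roles F
  | RStar E => rexp_roles E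
  end.

Fixpoint concept_names (C : concept) : list CName :=
  match C with
  | CAtom A => [A]
  | CAnd C1 C2 => concept_names C1 ++ concept_names C2
  | CAll _ C1 => concept_names C1
  | _ => []
  end.

Fixpoint concept_roles (C : concept) : list RName :=
  match C with
  | CAnd C1 C2 => concept_roles C1 ++ concept_roles C2
  | CAll E C1 => rexp_roles E ++ concept_roles C1
  | _ => []
  end.

Definition tbox_names (T : tbox) : list CName :=
  flat_map (fun ax => concept_names (fst ax) ++ concept_names (snd ax)) T.
Definition tbox_roles (T : tbox) : list RName :=
  flat_map (fun ax => concept_roles (fst ax) ++ concept_roles (snd ax)) T.

Definition sigmaC (C D : concept) (T : tbox) : list CName :=
  concept_names C ++ concept_names D ++ tbox_names T.
Definition sigmaR (C D : concept) (T : tbox) : list RName :=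
  concept_roles C ++ concept_roles D ++ tbox_roles T.

Fixpoint replB (B : CName) (C : concept) : concept :=
  match C with
  | CBot => CAtom B
  | CAnd C1 C2 => CAnd (replB B C1) (replB B C2)
  | CAll E C1 => CAll E (replB B C1)
  | C' => C'
  end.

Definition tboxB (B : CName) (T : tbox) : tbox :=
  map (fun ax => (replB B (fst ax), replB B (snd ax))) T.

Definition tboxR (B : CName) (SC : list CName) (SR : list RName) : tbox :=
  map (fun A => (CAtom B, CAtom A)) SC ++
  map (fun r => (CAtom B, CAll (RRole r) (CAtom B))) SR.

From Stdlib Require Import List Classical ProofIrrelevance.
Import ListNotations.

(* Interpreting B as the empty set turns each K^B into K and makes the axioms of R
   vacuous, so a countermodel of C ⊑_T D yields one of the reduced subsumption.
   Conversely, in a model J of T^B ∪ R the extension of B lies below every concept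
   name and is closed under every role of the signature, so each of its elements
   satisfies every K^B.  Hence restricting J to the complement of B loses no
   counterexample to a value restriction, and gives a model of T in which every K
   has the extension of K^B. *)

Definition over_sig (SC : list CName) (SR : list RName) (K : concept) : Prop :=
  incl (concept_names K) SC /\ incl (concept_roles K) SR.

Definition tbox_over_sig (SC : list CName) (SR : list RName) (T : tbox) : Prop :=
  forall ax, In ax T -> over_sig SC SR (fst ax) /\ over_sig SC SR (snd ax).

Lemma over_sig_andE SC SR K1 K2 :
  over_sig SC SR (CAnd K1 K2) -> over_sig SC SR K1 /\ over_sig SC SR K2.
Proof.
  intros [Hn Hr]; simpl in *.
  apply incl_app_inv in Hn as [Hn1 Hn2], Hr as [Hr1 Hr2]; split; split; assumption.
Qed.

Lemma over_sig_allE SC SR E K :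
  over_sig SC SR (CAll E K) -> incl (rexp_roles E) SR /\ over_sig SC SR K.
Proof.
  intros [Hn Hr]; simpl in *; apply incl_app_inv in Hr as [HE HK]; split; [|split]; assumption.
Qed.

Lemma lang_roles_incl E w : lang E w -> incl w (rexp_roles E).
Proof.
  induction 1; simpl; intros a Ha; rewrite ?in_app_iff in *; firstorder.
Qed.

Lemma model_app I T1 T2 : model I (T1 ++ T2) <-> model I T1 /\ model I T2.
Proof.
  unfold model; split.
  - intros H; split; intros ax Hax; apply H, in_app_iff; auto.
  - intros [H1 H2] ax Hax; apply in_app_iff in Hax as [Hax|Hax]; auto.
Qed.

Lemma model_tboxB I B T :
  model I (tboxB B T) <->
  forall ax, In ax T -> forall x, cext I (replB B (fst ax)) x -> cext I (replB B (snd ax)) x.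
Proof.
  unfold model, tboxB; split.
  - intros H ax Hax; apply (H (_, _)), in_map_iff; exists ax; auto.
  - intros H ax' Hax'; apply in_map_iff in Hax' as [ax [<- Hax]]; exact (H ax Hax).
Qed.

Lemma rexp_rel_role I r x y : rexp_rel I (RRole r) x y <-> rint I r x y.
Proof.
  split.
  - intros [w [Hw Hxy]]; inversion Hw; subst.
    destruct Hxy as [z [Hxz <-]]; exact Hxz.
  - intros Hxy; exists [r]; split; [constructor | simpl; eauto].
Qed.

Lemma model_tboxR J B SC SR :
  model J (tboxR B SC SR) <->
  (forall A x, In A SC -> cint J B x -> cint J A x) /\
  (forall r x y, In r SR -> cint J B x -> rint J r x y -> cint J B y).
Proof.
  unfold model, tboxR; split.
  - intros H; split.
    + intros A x HA; apply (H (CAtom B, CAtom A)), in_app_iff; left; apply in_map_iff; eauto.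
    + intros r x y Hr Hx Hxy.
      refine (H (CAtom B, CAll (RRole r) (CAtom B)) _ x Hx y _).
      * apply in_app_iff; right; apply in_map_iff; eauto.
      * apply rexp_rel_role; exact Hxy.
  - intros [HA Hr] ax Hax.
    apply in_app_iff in Hax as [Hax|Hax]; apply in_map_iff in Hax as [a [<- Ha]]; simpl.
    + auto.
    + intros x Hx y Hxy; apply rexp_rel_role in Hxy; eauto.
Qed.

Section EmptyConcept.
Variables (I : interp) (B : CName).

Definition with_empty : interp :=
  {| dom := dom I; dom_ne := dom_ne I;
     cint := fun A x => A <> B /\ cint I A x;
     rint := rint I |}.

Lemma rexp_rel_with_empty E x y : rexp_rel with_empty E x y <-> rexp_rel I E x y.
Proof.
  enough (Hw : forall w x y, word_rel with_empty w x y <-> word_rel I w x y).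
  { unfold rexp_rel; setoid_rewrite Hw; reflexivity. }
  induction w as [|r w IH]; simpl; intros x' y'; [reflexivity|].
  setoid_rewrite IH; reflexivity.
Qed.

Lemma cext_with_empty_replB K x :
  ~ In B (concept_names K) -> cext with_empty (replB B K) x <-> cext I K x.
Proof.
  revert x; induction K as [A| | |K1 IH1 K2 IH2|E K IH]; simpl; intros x HB.
  - split; [tauto | split; [intros ->; tauto | assumption]].
  - tauto.
  - tauto.
  - rewrite in_app_iff in HB; rewrite IH1, IH2 by tauto; tauto.
  - split; intros H y Hxy; apply IH, H; rewrite ?rexp_rel_with_empty in *; assumption.
Qed.

Lemma model_with_empty_tboxB T :
  (forall ax, In ax T -> ~ In B (concept_names (fst ax)) /\ ~ In B (concept_names (snd ax))) ->
  model I T -> model with_empty (tboxB B T).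
Proof.
  intros HB HI; apply model_tboxB; intros ax Hax x.
  destruct (HB ax Hax); rewrite !cext_with_empty_replB by assumption; apply HI, Hax.
Qed.

Lemma model_with_empty_tboxR SC SR : model with_empty (tboxR B SC SR).
Proof. apply model_tboxR; split; simpl; tauto. Qed.

End EmptyConcept.

Section Restriction.
Variables (J : interp) (B : CName) (SC : list CName) (SR : list RName).
Hypothesis B_below : forall A x, In A SC -> cint J B x -> cint J A x.
Hypothesis B_closed : forall r x y, In r SR -> cint J B x -> rint J r x y -> cint J B y.

Lemma word_rel_B_closed w x y : incl w SR -> word_rel J w x y -> cint J B x -> cint J B y.
Proof.
  revert x; induction w as [|r w IH]; simpl; intros x Hw Hxy Hx.
  - subst; exact Hx.
  - destruct Hxy as [z [Hxz Hzy]].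
    apply incl_cons_inv in Hw as [Hr Hw].
    exact (IH z Hw Hzy (B_closed r x z Hr Hx Hxz)).
Qed.

Lemma cext_replB_of_B K x : over_sig SC SR K -> cint J B x -> cext J (replB B K) x.
Proof.
  revert x; induction K as [A| | |K1 IH1 K2 IH2|E K IH]; intros x HK Hx; simpl.
  - apply B_below; [apply (proj1 HK); left; reflexivity | exact Hx].
  - trivial.
  - exact Hx.
  - apply over_sig_andE in HK as [HK1 HK2]; auto.
  - apply over_sig_allE in HK as [HE HK].
    intros y [w [Hw Hxy]].
    apply IH; [exact HK |].
    exact (word_rel_B_closed w x y (incl_tran (lang_roles_incl E w Hw) HE) Hxy Hx).
Qed.

Variables (x0 : dom J) (Hx0 : ~ cint J B x0).

Definition restrict : interp :=
  {| dom := {x : dom J | ~ cint J B x};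
     dom_ne := inhabits (exist _ x0 Hx0);
     cint := fun A x => cint J A (proj1_sig x);
     rint := fun r x y => rint J r (proj1_sig x) (proj1_sig y) |}.

Lemma word_rel_restrict w (x y : dom restrict) :
  incl w SR -> word_rel restrict w x y <-> word_rel J w (proj1_sig x) (proj1_sig y).
Proof.
  revert x; induction w as [|r w IH]; simpl; intros x Hw.
  - split; [intros ->; reflexivity |].
    apply eq_sig_hprop; intros; apply proof_irrelevance.
  - apply incl_cons_inv in Hw as [Hr Hw].
    split.
    + intros [z [Hxz Hzy]]; exists (proj1_sig z); split; [| apply IH]; assumption.
    + intros [z [Hxz Hzy]].
      (* an intermediate point in B would force y into B *)
      assert (Hz : ~ cint J B z).
      { intros HzB; exact (proj2_sig y (word_rel_B_closed w z _ Hw Hzy HzB)). }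
      exists (exist _ z Hz); split; [| apply IH]; assumption.
Qed.

Lemma cext_restrict K (x : dom restrict) :
  over_sig SC SR K -> cext restrict K x <-> cext J (replB B K) (proj1_sig x).
Proof.
  revert x; induction K as [A| | |K1 IH1 K2 IH2|E K IH]; intros x HK; simpl.
  - reflexivity.
  - reflexivity.
  - split; [contradiction | exact (proj2_sig x)].
  - apply over_sig_andE in HK as [HK1 HK2]; rewrite IH1, IH2 by assumption; reflexivity.
  - apply over_sig_allE in HK as [HE HK].
    split.
    + intros H y [w [Hw Hxy]].
      destruct (classic (cint J B y)) as [HyB | HyB].
      * exact (cext_replB_of_B K y HK HyB).
      * apply (IH (exist _ y HyB) HK), H.
        exists w; split; [exact Hw |].
        apply word_rel_restrict; [exact (incl_tran (lang_roles_incl E w Hw) HE) | exact Hxy].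
    + intros H y [w [Hw Hxy]].
      apply IH, H; [exact HK |].
      exists w; split; [exact Hw |].
      apply word_rel_restrict; [exact (incl_tran (lang_roles_incl E w Hw) HE) | exact Hxy].
Qed.

Lemma model_restrict T : tbox_over_sig SC SR T -> model J (tboxB B T) -> model restrict T.
Proof.
  intros HT HJ ax Hax x.
  destruct (HT ax Hax) as [Hl Hr].
  rewrite !cext_restrict by assumption.
  apply (proj1 (model_tboxB J B T) HJ ax Hax).
Qed.

End Restriction.

Lemma subsumed_replB_of_subsumed T C D B SC SR :
  tbox_over_sig SC SR T -> over_sig SC SR C -> over_sig SC SR D ->
  subsumed T C D -> subsumed (tboxB B T ++ tboxR B SC SR) (replB B C) (replB B D).
Proof.
  intros HT HC HD Hsub J HJ x Hx.
  apply model_app in HJ as [HJT HJR].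
  apply model_tboxR in HJR as [B_below B_closed].
  destruct (classic (cint J B x)) as [HxB | HxB].
  - exact (cext_replB_of_B J B SC SR B_below B_closed D x HD HxB).
  - pose proof (cext_restrict J B SC SR B_below B_closed x HxB) as Hext.
    pose (x' := exist (fun y => ~ cint J B y) x HxB).
    apply (Hext D x' HD), Hsub, (Hext C x' HC), Hx.
    exact (model_restrict J B SC SR B_below B_closed x HxB T HT HJT).
Qed.

Lemma subsumed_of_subsumed_replB T C D B SC SR :
  ~ In B SC -> tbox_over_sig SC SR T -> over_sig SC SR C -> over_sig SC SR D ->
  subsumed (tboxB B T ++ tboxR B SC SR) (replB B C) (replB B D) -> subsumed T C D.
Proof.
  intros HB HT HC HD Hsub I HI x Hx.
  assert (fresh : forall K, over_sig SC SR K -> ~ In B (concept_names K))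
    by (intros K HK HBK; exact (HB (proj1 HK B HBK))).
  apply (cext_with_empty_replB I B D x (fresh D HD)).
  apply Hsub.
  - apply model_app; split.
    + apply model_with_empty_tboxB; [| exact HI].
      intros ax Hax; destruct (HT ax Hax); split; apply fresh; assumption.
    + apply model_with_empty_tboxR.
  - apply cext_with_empty_replB; [apply fresh |]; assumption.
Qed.

Lemma over_sigma_l C D T : over_sig (sigmaC C D T) (sigmaR C D T) C.
Proof. split; apply incl_appl, incl_refl. Qed.

Lemma over_sigma_r C D T : over_sig (sigmaC C D T) (sigmaR C D T) D.
Proof. split; apply incl_appr, incl_appl, incl_refl. Qed.

Lemma tbox_over_sigma C D T : tbox_over_sig (sigmaC C D T) (sigmaR C D T) T.
Proof.
  intros ax Hax.
  assert (Hn : incl (concept_names (fst ax) ++ concept_names (snd ax)) (tbox_names T))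
    by (intros A HA; apply in_flat_map; eauto).
  assert (Hr : incl (concept_roles (fst ax) ++ concept_roles (snd ax)) (tbox_roles T))
    by (intros r Hr; apply in_flat_map; eauto).
  apply incl_app_inv in Hn as [Hn1 Hn2], Hr as [Hr1 Hr2].
  split; split; apply incl_appr, incl_appr; assumption.
Qed.

Theorem theorem2 (C D : concept) (T : tbox) (B : CName) :
  ~ In B (sigmaC C D T) ->
  (subsumed T C D <->
   subsumed (tboxB B T ++ tboxR B (sigmaC C D T) (sigmaR C D T))
            (replB B C) (replB B D)).
Proof.
  intros HB; split.
  - apply subsumed_replB_of_subsumed;
      [apply tbox_over_sigma | apply over_sigma_l | apply over_sigma_r].
  - apply subsumed_of_subsumed_replB;
      [exact HB | apply tbox_over_sigma | apply over_sigma_l | apply over_sigma_r].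
Qed.
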